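(* Let $m\ge 3$ and let $K\subset\mathbb{R}^m$ be a self-dual, smooth, strictly convex cone. Then there is no proper cone $L\subset\mathbb{R}^m$ such that $K$ is an $L$-isotone projection set.
   Context: $\mathbb{R}^m$ carries the standard inner product. A proper cone is a closed convex cone $K$ that is pointed ($K\cap(-K)=\{0\}$) and generating ($K-K=\mathbb{R}^m$). The dual cone is $K^*=\{y:\langle x,y\rangle\ge0\ \forall x\in K\}$; $K$ is self-dual if $K=K^*$. For $u\neq 0$, $H(u,0)=\{x:\langle u,x\rangle=0\}$ and $H_-(u,0)=\{x:\langle u,x\rangle\le0\}$; $H(u,0)$ is a supporting hyperplane of $K$ if $K\subset H_-(u,0)$. A proper cone $K$ is strictly convex if $\dim(K\cap H(u,0))\le1$ for every supporting hyperplane $H(u,0)$ of $K$; a strictly convex proper cone is smooth if through each boundary point $x\neq0$ of $K$ there is exactly one supporting hyperplane. For a cone $L$, $x\le_L y$ means $y-x\in L$; $P_K$ is the metric projection onto $K$, and $K$ is an $L$-isotone projection set if $x\le_L y$ implies $P_Kx\le_L P_Ky$. *)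

From HB Require Import structures.
From mathcomp Require Import all_boot all_order all_algebra.
From mathcomp Require Import all_classical all_reals all_analysis.
Import numFieldNormedType.Exports.
Set Implicit Arguments. Unset Strict Implicit. Unset Printing Implicit Defensive.
Import Order.TTheory GRing.Theory Num.Theory.
Local Open Scope classical_set_scope.
Local Open Scope ring_scope.

Section ConeDefs.
Variables (R : realType) (m : nat).
Implicit Types (K L : set 'rV[R]_m) (x y u : 'rV[R]_m).

Definition dotp x y : R := \sum_(i < m) x ord0 i * y ord0 i.

Definition closed_convex_cone K : Prop :=
  [/\ closed K, K 0,
      (forall x y, K x -> K y -> K (x + y)) &
      (forall (t : R) x, 0 <= t -> K x -> K (t *: x))].

Definition pointed K : Prop := forall x, K x -> K (- x) -> x = 0.
Definition generating K : Prop :=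
  forall z, exists x y, [/\ K x, K y & z = x - y].

Definition proper_cone K : Prop :=
  [/\ closed_convex_cone K, pointed K & generating K].

Definition dual_cone K : set 'rV[R]_m :=
  [set y | forall x, K x -> 0 <= dotp x y].
Definition self_dual K : Prop := K = dual_cone K.

Definition hyperplane u : set 'rV[R]_m := [set x | dotp u x = 0].
Definition halfspace_le u : set 'rV[R]_m := [set x | dotp u x <= 0].

Definition supporting K u : Prop := u != 0 /\ K `<=` halfspace_le u.

(* dim S <= k : the linear span of S (= affine hull, when 0 \in S) has
   dimension at most k, i.e. every finite family of vectors of S has rank <= k *)
Definition dim_le (S : set 'rV[R]_m) (k : nat) : Prop :=
  forall n (A : 'M[R]_(n, m)), (forall i, S (row i A)) -> (\rank A <= k)%N.

Definition strictly_convex_cone K : Prop :=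
  proper_cone K /\
  forall u, supporting K u -> dim_le (K `&` hyperplane u) 1.

Definition boundary_pt K x : Prop := K x /\ ~ (interior K) x.

Definition smooth_cone K : Prop :=
  strictly_convex_cone K /\
  forall x, boundary_pt K x -> x != 0 ->
    exists u, [/\ supporting K u, hyperplane u x &
      forall u', supporting K u' -> hyperplane u' x ->
                 hyperplane u' = hyperplane u].

Definition cone_le L x y : Prop := L (y - x).

Definition is_metric_proj K x p : Prop :=
  K p /\ forall y, K y -> dotp (x - p) (x - p) <= dotp (x - y) (x - y).

Definition isotone_projection_set L K : Prop :=
  forall x y p q, cone_le L x y -> is_metric_proj K x p ->
    is_metric_proj K y q -> cone_le L p q.

End ConeDefs.

(* If [a], [b] in [K] are not colinear,
   strict convexity makes [a + b] strictly positive on [K \ 0], hence an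
   interior point of [K].  An interior point of [K] lying in [L] forces
   [K <= L] by isotonicity of [P_K] (compare [- (a + b - t k)] with [t k]), and
   [K <= L] forces [L = K], which is incompatible with isotonicity near an
   orthogonal pair of [K].  So [K `&` L] and [K `&` - L] are contained in lines.
   By Moreau's decomposition every [w] in [L] is [P_K w - P_K (- w)] with
   [P_K w] in [K `&` L] and [P_K (- w)] in [K `&` - L]; thus [L] lies in a plane,
   which a generating cone of [R^m], [m >= 3], cannot. *)

From HB Require Import structures.
From mathcomp Require Import all_boot all_order all_algebra.
From mathcomp Require Import all_classical all_reals all_analysis.
From mathcomp Require Import ring lra.
Import numFieldNormedType.Exports.
Import Order.TTheory GRing.Theory Num.Theory.
Local Open Scope classical_set_scope.
Local Open Scope ring_scope.
Set Implicit Arguments. Unset Strict Implicit. Unset Printing Implicit Defensive.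

Section InnerProduct.
Variables (R : realType) (m : nat).
Implicit Types (x y z : 'rV[R]_m).

Lemma dotpC x y : dotp x y = dotp y x.
Proof. by apply: eq_bigr => i _; rewrite mulrC. Qed.

Lemma dotpDl x y z : dotp (x + y) z = dotp x z + dotp y z.
Proof. by rewrite /dotp -big_split; apply: eq_bigr => i _; rewrite mxE mulrDl. Qed.

Lemma dotpZl a x y : dotp (a *: x) y = a * dotp x y.
Proof. by rewrite /dotp mulr_sumr; apply: eq_bigr => i _; rewrite mxE mulrA. Qed.

Lemma dotpNl x y : dotp (- x) y = - dotp x y.
Proof. by rewrite -scaleN1r dotpZl mulN1r. Qed.

Lemma dotpBl x y z : dotp (x - y) z = dotp x z - dotp y z.
Proof. by rewrite dotpDl dotpNl. Qed.

Lemma dotpDr x y z : dotp x (y + z) = dotp x y + dotp x z.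
Proof. by rewrite dotpC dotpDl !(dotpC x). Qed.

Lemma dotpZr a x y : dotp x (a *: y) = a * dotp x y.
Proof. by rewrite dotpC dotpZl dotpC. Qed.

Lemma dotpNr x y : dotp x (- y) = - dotp x y.
Proof. by rewrite dotpC dotpNl dotpC. Qed.

Lemma dotpBr x y z : dotp x (y - z) = dotp x y - dotp x z.
Proof. by rewrite dotpDr dotpNr. Qed.

Lemma dotp0l x : dotp 0 x = 0.
Proof. by rewrite -(scale0r 0) dotpZl mul0r. Qed.

Lemma dotp0r x : dotp x 0 = 0.
Proof. by rewrite dotpC dotp0l. Qed.

Lemma dotpp_ge0 x : 0 <= dotp x x.
Proof. by apply: sumr_ge0 => i _; rewrite -expr2 sqr_ge0. Qed.

Lemma dotpp_eq0 x : (dotp x x == 0) = (x == 0).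
Proof.
apply/idP/eqP => [/eqP|->]; last by rewrite dotp0l.
move=> /psumr_eq0P x0; apply/rowP => i; rewrite mxE.
have /eqP : x ord0 i * x ord0 i = 0 by apply: x0 => // j _; rewrite -expr2 sqr_ge0.
by rewrite mulf_eq0 orbb => /eqP.
Qed.

Lemma dotpp_gt0 x : (0 < dotp x x) = (x != 0).
Proof. by rewrite lt_def dotpp_eq0 dotpp_ge0 andbT. Qed.

Lemma coord_sqr_le_dotpp x i : x ord0 i ^+ 2 <= dotp x x.
Proof.
rewrite /dotp (bigD1 i) //= expr2 lerDl.
by apply: sumr_ge0 => k _; rewrite -expr2 sqr_ge0.
Qed.

Lemma dotp_CauchySchwarz x y : dotp x y ^+ 2 <= dotp x x * dotp y y.
Proof.
have [->|y0] := eqVneq y 0; first by rewrite !dotp0r expr2 !mulr0.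
have yy : 0 < dotp y y by rewrite dotpp_gt0.
have := dotpp_ge0 (dotp y y *: x - dotp x y *: y).
rewrite !(dotpBl, dotpBr, dotpZl, dotpZr) (dotpC y x); nra.
Qed.

End InnerProduct.

Section LinearAlgebra.
Variables (R : realType) (m : nat).
Implicit Types (x y : 'rV[R]_m).

Lemma exists_orthogonal n (A : 'M[R]_(n, m)) : (n < m)%N ->
  exists2 f, f != 0 & forall i, dotp f (row i A) = 0.
Proof.
move=> nm; exists (nz_row (kermx A^T)).
  rewrite nz_row_eq0 -mxrank_eq0 mxrank_ker subn_eq0 -ltnNge mxrank_tr.
  exact: leq_ltn_trans (rank_leq_row A) nm.
have /eqP fA0 : nz_row (kermx A^T) *m A^T == 0 by rewrite -sub_kermx nz_row_sub.
move=> i; have := congr1 (fun (M : 'M[R]_(1, n)) => M ord0 i) fA0.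
rewrite mxE [RHS]mxE => <-; by apply: eq_bigr => k _; rewrite !mxE.
Qed.

Lemma exists_orthogonal2 x y : (2 < m)%N ->
  exists2 f, f != 0 & dotp f x = 0 /\ dotp f y = 0.
Proof.
move=> m_gt2; have [f f0 fxy] := exists_orthogonal (col_mx x y) m_gt2.
exists f => //; split.
  by have := fxy (lshift 1 ord0); rewrite rowKu row_id.
by have := fxy (rshift 1 ord0); rewrite rowKd row_id.
Qed.

Lemma scale_of_rank_col_mx x y : x != 0 -> (\rank (col_mx x y) <= 1)%N ->
  exists t, y = t *: x.
Proof.
move=> x0 rk.
have sx : (x <= col_mx x y)%MS by rewrite -addsmxE addsmxSl.
have sy : (y <= col_mx x y)%MS by rewrite -addsmxE addsmxSr.
have := mxrank_leqif_sup sx; rewrite rank_rV x0 => /leqifP.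
case: ifP => [xxy _|_ /=]; last by rewrite ltnNge rk.
have /submxP [D ->] := submx_trans sy xxy.
by exists (D ord0 ord0); rewrite {1}[D]mx11_scalar mul_scalar_mx.
Qed.

End LinearAlgebra.

Section Topology.
Variables (R : realType) (m : nat).

Lemma continuous_dotp (f g : 'rV[R]_m -> 'rV[R]_m) :
  continuous f -> continuous g -> continuous (fun u => dotp (f u) (g u)).
Proof.
move=> cf cg; apply: continuous_big; first exact: add_continuous.
move=> i _ u; apply: continuousM.
  exact: continuous_comp (cf u) (@coord_continuous R 1 m ord0 i (f u)).
exact: continuous_comp (cg u) (@coord_continuous R 1 m ord0 i (g u)).
Qed.

Lemma closed_dotpp_le (B : R) : closed [set y : 'rV[R]_m | dotp y y <= B].
Proof.
have id_cont : continuous (fun y : 'rV[R]_m => y) by move=> y; exact: cvg_id.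
rewrite -[X in closed X]/((fun y => dotp y y) @^-1` [set r | r <= B]).
apply: preimage_closed; last exact: closed_le.
by move=> y _; apply: (continuous_dotp id_cont id_cont).
Qed.

Lemma compact_dotpp_le (C : set 'rV[R]_m) (B : R) :
  closed C -> (forall y, C y -> dotp y y <= B) -> compact C.
Proof.
move=> Ccl CB; apply: (subclosed_compact Ccl).
  apply: (@rV_compact _ _ (fun=> `[- (1 + B), 1 + B]%classic)) => _.
  exact: segment_compact.
move=> y /CB yB i /=; rewrite in_itv /= -ler_norml.
have := coord_sqr_le_dotpp y i; have := dotpp_ge0 y.
rewrite -real_normK ?num_real //; have := normr_ge0 (y ord0 i); nra.
Qed.

Lemma closed_bounded_argmin (C : set 'rV[R]_m) (g : 'rV[R]_m -> R) (B : R) y0 :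
  closed C -> (forall y, C y -> dotp y y <= B) -> C y0 -> continuous g ->
  exists2 c, C c & forall y, C y -> g c <= g y.
Proof.
move=> Ccl CB Cy0 cg.
have [c Cc cmin] := @EVT_min_rV R m g C (ex_intro _ y0 Cy0)
  (compact_dotpp_le Ccl CB) (continuous_subspaceT cg).
by exists c; [rewrite inE in Cc | move=> y Cy; apply: cmin; rewrite inE].
Qed.

End Topology.

Lemma ge0_of_first_order (R : realType) (c d : R) : 0 <= d ->
  (forall s, 0 < s -> s <= 1 -> 0 <= s * (2 * c) + s ^+ 2 * d) -> 0 <= c.
Proof.
move=> d0 H; rewrite leNgt; apply/negP => c0.
have dc : 0 < d - c by lra.
pose s := - c / (d - c).
have sdc : s * (d - c) = - c by rewrite /s mulfVK // gt_eqF.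
have s0 : 0 < s by rewrite /s divr_gt0 // oppr_gt0.
have s1 : s <= 1 by nra.
have := H s s0 s1; nra.
Qed.

Section SelfDualCone.
Variables (R : realType) (m : nat) (K : set 'rV[R]_m).
Hypotheses (Kcone : closed_convex_cone K) (Kself : self_dual K).
Implicit Types (x y a b p : 'rV[R]_m).

Lemma cone_closed : closed K. Proof. by case: Kcone. Qed.

Lemma cone0 : K 0. Proof. by case: Kcone. Qed.

Lemma coneD x y : K x -> K y -> K (x + y). Proof. by case: Kcone => _ _ + _; apply. Qed.

Lemma coneZ t x : 0 <= t -> K x -> K (t *: x). Proof. by case: Kcone => _ _ _; apply. Qed.

Lemma dotp_cone_ge0 x y : K x -> K y -> 0 <= dotp x y.
Proof. by move=> Kx; rewrite Kself; apply. Qed.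

Lemma cone_of_dotp_ge0 y : (forall x, K x -> 0 <= dotp x y) -> K y.
Proof. by move=> Ky; rewrite Kself. Qed.

Lemma metric_proj_orth a b : K a -> K b -> dotp a b = 0 ->
  is_metric_proj K (a - b) a.
Proof.
move=> Ka Kb ab; split => // y Ky.
have := dotp_cone_ge0 Ky Kb; have := dotpp_ge0 (a - y).
rewrite !(dotpBl, dotpBr) (dotpC b a) (dotpC y a) (dotpC b y) ab; lra.
Qed.

Lemma metric_proj_id p : K p -> is_metric_proj K p p.
Proof.
move=> Kp; rewrite -[X in is_metric_proj _ X](subr0 p).
by apply: metric_proj_orth; rewrite ?dotp0r //; exact: cone0.
Qed.

(* The variational inequality of the projection, read through [K = K^*]. *)
Lemma metric_proj_residual x p : is_metric_proj K x p ->
  K (p - x) /\ dotp p (p - x) = 0.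
Proof.
move=> [Kp pmin].
have Kpx : K (p - x).
  apply: cone_of_dotp_ge0 => k Kk; apply: (ge0_of_first_order (dotpp_ge0 k)) => s s0 _.
  have := pmin (p + s *: k) (coneD Kp (coneZ (ltW s0) Kk)).
  rewrite !(dotpBl, dotpBr, dotpDl, dotpDr, dotpZl, dotpZr) (dotpC x p) (dotpC k x).
  rewrite (dotpC k p) expr2; lra.
have px : 0 <= dotp p (x - p).
  apply: (ge0_of_first_order (dotpp_ge0 p)) => s s0 s1.
  have := pmin ((1 - s) *: p) (coneZ _ Kp); rewrite subr_ge0 => /(_ s1).
  rewrite !(dotpBl, dotpBr, dotpDl, dotpDr, dotpZl, dotpZr) (dotpC x p) expr2; lra.
split => //; have := dotp_cone_ge0 Kp Kpx; move: px; rewrite !dotpBr; lra.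
Qed.

Lemma metric_proj_exists x : exists p, is_metric_proj K x p.
Proof.
pose C := K `&` [set y | dotp y y <= 4 * dotp x x].
have x0 : 0 <= 4 * dotp x x by rewrite mulr_ge0 // dotpp_ge0.
have C0 : C 0 by split; [exact: cone0 | rewrite /= dotp0l].
have dist_cont : continuous (fun y => dotp (x - y) (x - y)).
  have xy_cont : continuous (fun y : 'rV[R]_m => x - y).
    by move=> y; apply: continuousB; [exact: cst_continuous | exact: cvg_id].
  exact: (continuous_dotp xy_cont xy_cont).
have Ccl : closed C by apply: closedI; [exact: cone_closed | exact: closed_dotpp_le].
have [c [Kc _] cmin] :=
  closed_bounded_argmin Ccl (fun y Cy => proj2 Cy) C0 dist_cont.
exists c; split => // y Ky.
have [yB|yB] := lerP (dotp y y) (4 * dotp x x); first exact: cmin.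
apply: le_trans (cmin 0 C0) _.
(* far from the origin, [y] is farther from [x] than [0] is *)
have := dotp_CauchySchwarz x y; have := dotpp_ge0 x; move: yB.
rewrite !(dotpBl, dotpBr) !(dotp0l, dotp0r) (dotpC y x) => yB xx cs.
suff : 2 * dotp x y <= dotp y y by lra.
have [xy0|xy0] := lerP (dotp x y) 0; first lra.
rewrite leNgt; apply/negP => yxy.
have : dotp y y * dotp y y < 2 * dotp x y * (2 * dotp x y) by nra.
nra.
Qed.

Lemma metric_proj_dist_le x p y : is_metric_proj K x p -> K y ->
  dotp (p - y) (p - y) <= dotp (x - y) (x - y).
Proof.
move=> px Ky; have [Kpx ppx] := metric_proj_residual px.
have := dotp_cone_ge0 Ky Kpx; have := dotpp_ge0 (p - x); move: ppx.
rewrite !(dotpBl, dotpBr) (dotpC x p) (dotpC y p) (dotpC y x); lra.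
Qed.

Lemma exists_orthogonal_pair k : (1 < m)%N -> K k -> k != 0 ->
  exists a b, [/\ K a, K b, a != 0, b != 0 & dotp a b = 0].
Proof.
move=> m_gt1 Kk k0.
have [f f0 /(_ ord0)] := exists_orthogonal k m_gt1; rewrite row_id => fk.
have [p pf] := metric_proj_exists f; have [Kpf ppf] := metric_proj_residual pf.
have [p0|p0] := eqVneq p 0.
  exists k, (- f); split => //; first by rewrite -sub0r -p0.
    by rewrite oppr_eq0.
  by rewrite dotpNr dotpC fk oppr0.
have [pfe|pf0] := eqVneq p f.
  by exists k, f; split => //; [rewrite -pfe; case: pf | rewrite dotpC].
by exists p, (p - f); split => //; [case: pf | rewrite subr_eq0].
Qed.

Lemma coercive_of_dotp_gt0 s : (forall u, K u -> u != 0 -> 0 < dotp s u) ->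
  exists2 mu, 0 < mu & forall u, K u -> mu * dotp u u <= dotp s u ^+ 2.
Proof.
move=> spos; pose S := K `&` [set u | dotp u u = 1].
have [[e [Ke e0]]|K0] := pselect (exists u, K u /\ u != 0); last first.
  exists 1 => // u Ku; have [->|u0] := eqVneq u 0; first by rewrite dotp0l mulr0 sqr_ge0.
  by case: K0; exists u.
have Sdir u : K u -> u != 0 -> S ((Num.sqrt (dotp u u))^-1 *: u).
  move=> Ku u0; have uu : 0 < dotp u u by rewrite dotpp_gt0.
  split; first by apply: coneZ => //; rewrite invr_ge0 sqrtr_ge0.
  by rewrite /= dotpZl dotpZr mulrA -expr2 exprVn sqr_sqrtr ?ltW // mulVf ?gt_eqF.
have id_cont : continuous (fun y : 'rV[R]_m => y) by move=> y; exact: cvg_id.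
have Scl : closed S.
  apply: closedI; first exact: cone_closed.
  rewrite -[X in closed X]/((fun y => dotp y y) @^-1` [set r | r = 1]).
  apply: preimage_closed; last exact: closed_eq.
  by move=> y _; apply: (continuous_dotp id_cont id_cont).
have S_le1 u : S u -> dotp u u <= 1 by move=> [_ /= ->].
have [c [Kc cc] cmin] := closed_bounded_argmin Scl S_le1 (Sdir _ Ke e0)
  (continuous_dotp (fun u => @cst_continuous _ _ s u) id_cont).
have c0 : c != 0 by rewrite -dotpp_gt0 (cc : dotp c c = 1) ltr01.
have sc0 := spos c Kc c0.
exists (dotp s c ^+ 2); first by rewrite exprn_gt0.
move=> u Ku; have [->|u0] := eqVneq u 0; first by rewrite dotp0l mulr0 sqr_ge0.
have := cmin _ (Sdir u Ku u0); rewrite dotpZr.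
have r0 : 0 < Num.sqrt (dotp u u) by rewrite sqrtr_gt0 dotpp_gt0.
rewrite -[X in _ * X <= _](sqr_sqrtr (dotpp_ge0 u)).
move: r0; set r := Num.sqrt (dotp u u) => r0 h.
have := ler_wpM2l (ltW r0) h; rewrite mulrA mulfV ?gt_eqF // mul1r => rsc.
have rc0 : 0 <= r * dotp s c by rewrite mulr_ge0 // ltW.
rewrite -exprMn [_ * r]mulrC; apply: lerXn2r; rewrite ?nnegrE //.
exact: le_trans rsc.
Qed.

Lemma interior_of_coercive s mu : K s ->
  (forall u, K u -> mu * dotp u u <= dotp s u ^+ 2) ->
  forall v, dotp v v < mu -> K (s + v).
Proof.
move=> Ks coer v vv.
have [p pf] := metric_proj_exists (s + v); have [Kq pq] := metric_proj_residual pf.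
move: Kq pq; set q := p - (s + v) => Kq pq.
have [q0|q0] := eqVneq q 0.
  by move: q0 pf => /eqP; rewrite subr_eq0 => /eqP <- [].
(* [(s + v).q = - q.q] forces [s.q <= |v.q|], against coercivity *)
have e : dotp (s + v) q = - dotp q q.
  have -> : s + v = p - q by rewrite /q subKr.
  by rewrite dotpBl pq sub0r.
have := coer q Kq; have := dotp_cone_ge0 Ks Kq.
have := dotp_CauchySchwarz v q; have := dotpp_gt0 q; rewrite q0 => qq.
move: e; rewrite dotpDl => e; nra.
Qed.

End SelfDualCone.

Section StrictlyConvexCone.
Variables (R : realType) (m : nat) (K : set 'rV[R]_m).
Hypotheses (Kcone : closed_convex_cone K) (Kself : self_dual K).
Hypothesis Kstrict : forall u, supporting K u -> dim_le (K `&` hyperplane u) 1.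
Implicit Types (a b p u v w x y z : 'rV[R]_m).

Lemma face_colinear w x y : K w -> w != 0 -> K x -> K y ->
  dotp w x = 0 -> dotp w y = 0 -> x != 0 -> exists t, y = t *: x.
Proof.
move=> Kw w0 Kx Ky wx wy x0; apply: (scale_of_rank_col_mx x0).
have supp : supporting K (- w).
  split; first by rewrite oppr_eq0.
  by move=> v Kv; rewrite /halfspace_le /= dotpNl oppr_le0 (dotp_cone_ge0 Kself).
apply: (Kstrict supp) => i; rewrite -(splitK i).
by case: (fintype.split i) => j /=; rewrite ?rowKu ?rowKd row_id;
  split; rewrite //= /hyperplane /= dotpNl ?wx ?wy oppr0.
Qed.

Lemma dotp_add_gt0 a b u : K a -> K b -> a != 0 -> (forall t, b != t *: a) ->
  K u -> u != 0 -> 0 < dotp (a + b) u.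
Proof.
move=> Ka Kb a0 nab Ku u0.
have ua := dotp_cone_ge0 Kself Ku Ka; have ub := dotp_cone_ge0 Kself Ku Kb.
rewrite dotpC dotpDr lt_def addr_ge0 // andbT; apply/eqP => uab.
have [t bt] : exists t, b = t *: a by apply: (face_colinear Ku u0 Ka Kb) => //; lra.
by have := nab t; rewrite bt eqxx.
Qed.

Lemma cone_ball_add a b : K a -> K b -> a != 0 -> (forall t, b != t *: a) ->
  exists2 mu, 0 < mu & forall v, dotp v v < mu -> K (a + b + v).
Proof.
move=> Ka Kb a0 nab.
have [mu mu0 coer] := coercive_of_dotp_gt0 Kcone
  (fun u => dotp_add_gt0 Ka Kb a0 nab (u := u)).
by exists mu => //; apply: (interior_of_coercive Kcone Kself (coneD Kcone Ka Kb) coer).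
Qed.

Lemma metric_proj_face_span a b z p : K a -> K b -> a != 0 -> b != 0 ->
  dotp a b = 0 -> dotp b z = 0 -> is_metric_proj K z p -> K (p - a) ->
  exists n l, z = n *: a + l *: b.
Proof.
move=> Ka Kb a0 b0 ab bz pz Kpa.
have [Kq pq] := metric_proj_residual Kcone Kself pz.
move: Kq pq; set q := p - z => Kq pq.
have zpq : z = p - q by rewrite /q subKr.
have aq : dotp a q = 0.
  have := dotp_cone_ge0 Kself Kq Kpa; have := dotp_cone_ge0 Kself Ka Kq.
  by rewrite dotpBr (dotpC q p) pq (dotpC q a); lra.
have [l ql] := face_colinear Ka a0 Kb Kq ab aq b0.
have bp : dotp b p = 0.
  have bb := dotpp_ge0 b.
  have : dotp b p = l * dotp b b by rewrite -dotpZr -ql -(subrK z p) -/q dotpDr bz addr0.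
  by move: pq; rewrite ql dotpZr dotpC; nra.
have ba : dotp b a = 0 by rewrite dotpC.
have [n pn] := face_colinear Kb b0 Ka (proj1 pz) ba bp a0.
by exists n, (- l); rewrite zpq pn ql scaleNr.
Qed.

End StrictlyConvexCone.

Lemma exists_small_sqr_scale (R : realType) (mu c : R) : 0 < mu -> 0 <= c ->
  exists2 t, 0 < t & t ^+ 2 * c < mu.
Proof.
move=> mu0 c0; pose t := mu / (mu + c + 1).
have d0 : 0 < mu + c + 1 by lra.
have tc : t * (mu + c + 1) = mu by rewrite /t mulfVK ?gt_eqF.
have t0 : 0 < t by rewrite /t divr_gt0.
by exists t => //; nra.
Qed.

Lemma isotone_projection_set_opp (R : realType) (m : nat) (L K : set 'rV[R]_m) :
  isotone_projection_set L K -> isotone_projection_set [set x | L (- x)] K.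
Proof.
move=> iso x y p q; rewrite /cone_le /= !opprB => Lyx px qy.
exact: iso _ _ _ _ Lyx qy px.
Qed.

Section IsotoneProjection.
Variables (R : realType) (m : nat) (K L : set 'rV[R]_m).
Hypotheses (Kcone : closed_convex_cone K) (Kself : self_dual K).
Hypothesis Kstrict : forall u, supporting K u -> dim_le (K `&` hyperplane u) 1.
Hypothesis m_ge3 : (3 <= m)%N.
Hypothesis Lpointed : pointed L.
Hypothesis LD : forall x y, L x -> L y -> L (x + y).
Hypothesis LZ : forall (t : R) x, 0 <= t -> L x -> L (t *: x).
Hypothesis Liso : isotone_projection_set L K.
Implicit Types (a b k p s w z : 'rV[R]_m).

Let metric_proj00 : is_metric_proj K 0 0 := metric_proj_id Kcone Kself (cone0 Kcone).

Lemma isotone_metric_proj_decomp w : L w ->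
  exists p b, [/\ K p, L p, K b, L (- b) & w = p - b].
Proof.
move=> Lw; have [p pw] := metric_proj_exists Kcone w.
have [Kpw ppw] := metric_proj_residual Kcone Kself pw.
have pnw : is_metric_proj K (- w) (p - w).
  have := metric_proj_orth Kself Kpw (proj1 pw) (eq_trans (dotpC _ _) ppw).
  by rewrite addrAC subrr add0r.
exists p, (p - w); split => //; [exact: proj1 pw | | | by rewrite subKr].
  have L0w : cone_le L 0 w by rewrite /cone_le subr0.
  by rewrite -[p]subr0; exact: Liso L0w metric_proj00 pw.
have Lnw0 : cone_le L (- w) 0 by rewrite /cone_le sub0r opprK.
by rewrite -sub0r; apply: Liso Lnw0 pnw metric_proj00.
Qed.

Lemma isotone_sub_of_interior s mu : L s -> 0 < mu ->
  (forall v, dotp v v < mu -> K (s + v)) -> K `<=` L.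
Proof.
move=> Ls mu0 sball k Kk.
have [t t0 tk] := exists_small_sqr_scale mu0 (dotpp_ge0 k).
have Kstk : K (s + - (t *: k)).
  by apply: sball; rewrite dotpNl dotpNr opprK dotpZl dotpZr mulrA -expr2.
have P0 : is_metric_proj K (0 - (s - t *: k)) 0.
  by apply: metric_proj_orth; rewrite ?dotp0l //; exact: cone0.
have Ptk := metric_proj_id Kcone Kself (coneZ Kcone (ltW t0) Kk).
have Lsk : cone_le L (0 - (s - t *: k)) (t *: k).
  by rewrite /cone_le sub0r opprK addrC subrK.
have := Liso Lsk P0 Ptk; rewrite /cone_le subr0.
have ti : 0 <= t^-1 by rewrite invr_ge0 ltW.
by move=> /(LZ ti); rewrite scalerA mulVf ?gt_eqF // scale1r.
Qed.

Lemma isotone_sup_of_sub : K `<=` L -> L `<=` K.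
Proof.
move=> KL w Lw; have [p [b [Kp _ Kb Lnb ->]]] := isotone_metric_proj_decomp Lw.
by rewrite (Lpointed (KL _ Kb) Lnb) subr0.
Qed.

(* Then [L = K]; for an orthogonal pair [a], [b] and [g] orthogonal to both,
   [z = 2a + t g] projects so close to [2a] that [a - b <=_L P_K z], whereas
   [a = P_K (a - b) <=_L P_K z] would put [z] in the plane of [a] and [b]. *)
Lemma cone_trivial_of_sub : K `<=` L -> forall k, K k -> k = 0.
Proof.
move=> KL k Kk; apply/eqP; apply: contraT => k0.
have LK := isotone_sup_of_sub KL.
have [a [b [Ka Kb a0 b0 ab]]] :=
  exists_orthogonal_pair Kcone Kself (leq_trans (ltnSn 1) (ltnW m_ge3)) Kk k0.
have [g g0 [ga gb]] := exists_orthogonal2 a b m_ge3.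
have nab t : b != t *: a.
  apply/eqP => bt; move: ab; rewrite bt dotpZr => /eqP.
  rewrite mulf_eq0 dotpp_eq0 (negbTE a0) orbF => /eqP t0.
  by move: b0; rewrite bt t0 scale0r eqxx.
have [mu mu0 ball] := cone_ball_add Kcone Kself Kstrict Ka Kb a0 nab.
have [t t0 tg] := exists_small_sqr_scale mu0 (dotpp_ge0 g).
pose z := 2%:R *: a + t *: g.
have bz : dotp b z = 0 by rewrite dotpDr !dotpZr (dotpC b) ab (dotpC b) gb !mulr0 addr0.
have gz : dotp g z = t * dotp g g by rewrite dotpDr !dotpZr ga mulr0 add0r.
have [p pz] := metric_proj_exists Kcone z.
have K2a : K (2%:R *: a) by apply: coneZ.
have zt : dotp (z - 2%:R *: a) (z - 2%:R *: a) < mu.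
  by rewrite /z addrAC subrr add0r dotpZl dotpZr mulrA -expr2.
have Kpab := ball _ (le_lt_trans (metric_proj_dist_le Kcone Kself pz K2a) zt).
have Lpab : cone_le L (a - b) p.
  apply: KL; rewrite /cone_le; suff -> : p - (a - b) = a + b + (p - 2%:R *: a) by [].
  by apply/rowP => i; rewrite !mxE; ring.
have Kpa := LK _ (Liso Lpab (metric_proj_orth Kself Ka Kb ab)
  (metric_proj_id Kcone Kself (proj1 pz))).
have [n [l zab]] := metric_proj_face_span Kcone Kself Kstrict Ka Kb a0 b0 ab bz pz Kpa.
move: gz; rewrite zab dotpDr !dotpZr ga gb !mulr0 addr0 => /esym/eqP.
by rewrite mulf_eq0 dotpp_eq0 (negbTE g0) (gt_eqF t0).
Qed.

Lemma isotone_colinear a1 a2 : K a1 -> L a1 -> K a2 -> L a2 -> a1 != 0 ->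
  exists t, a2 = t *: a1.
Proof.
move=> K1 L1 K2 L2 a10; have [//|nc] := pselect (exists t, a2 = t *: a1).
have n12 t : a2 != t *: a1 by apply/eqP => e; apply: nc; exists t.
have [mu mu0 ball] := cone_ball_add Kcone Kself Kstrict K1 K2 a10 n12.
have := cone_trivial_of_sub (isotone_sub_of_interior (LD L1 L2) mu0 ball) K1.
by move/eqP; rewrite (negbTE a10).
Qed.

Lemma isotone_ray : exists a0, forall a, K a -> L a -> exists t : R, a = t *: a0.
Proof.
have [[a0 [Ka0 La0 a00]]|none] := pselect (exists a0, [/\ K a0, L a0 & a0 != 0]).
  by exists a0 => a Ka La; exact: isotone_colinear.
exists 0 => a Ka La; exists 0; rewrite scale0r.
by apply/eqP; apply: contraT => a0; case: none; exists a.
Qed.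

End IsotoneProjection.

Theorem proposition1 (R : realType) (m : nat) (K : set 'rV[R]_m) :
  (3 <= m)%N -> self_dual K -> smooth_cone K ->
  ~ (exists L : set 'rV[R]_m, proper_cone L /\ isotone_projection_set L K).
Proof.
move=> m_ge3 Kself [[[Kcone _ _] Kstrict] _] [L [[[_ _ LD LZ] Lpointed Lgen] Liso]].
pose Ln := [set x : 'rV[R]_m | L (- x)].
have Lnpointed : pointed Ln by move=> x Lnx; rewrite /Ln /= opprK => Lx; exact: Lpointed.
have LnD x y : Ln x -> Ln y -> Ln (x + y) by rewrite /Ln /= opprD; exact: LD.
have LnZ t x : 0 <= t -> Ln x -> Ln (t *: x) by rewrite /Ln /= -scalerN; exact: LZ.
have [a0 rayL] := isotone_ray Kcone Kself Kstrict m_ge3 Lpointed LD LZ Liso.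
have [b0 rayLn] := isotone_ray Kcone Kself Kstrict m_ge3 Lnpointed LnD LnZ
  (isotone_projection_set_opp Liso).
have [f f0 [fa fb]] := exists_orthogonal2 a0 b0 m_ge3.
have fL w : L w -> dotp f w = 0.
  move=> Lw; have [p [b [Kp Lp Kb Lnb ->]]] :=
    isotone_metric_proj_decomp Kcone Kself Liso Lw.
  have [[s ->] [t ->]] := (rayL p Kp Lp, rayLn b Kb Lnb).
  by rewrite dotpBr !dotpZr fa fb !mulr0 subr0.
have [x [y [Lx Ly fxy]]] := Lgen f.
by move: f0; rewrite -dotpp_eq0 {2}fxy dotpBr !fL // subr0 eqxx.
Qed.
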